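(* For $\tau$ in the upper half plane, with $\eta=\eta(\tau)$: $$\theta_2(0|\tfrac{2\tau}{3})\theta_3(0|6\tau)-\theta_3(0|\tfrac{2\tau}{3})\theta_2(0|6\tau)=2\eta^2,$$ $$\theta_4(0|\tfrac{3\tau}{2})\theta_3(0|\tfrac{\tau}{6})-\theta_3(0|\tfrac{3\tau}{2})\theta_4(0|\tfrac{\tau}{6})=4\eta^2.$$
   Context: With $q^s=e^{2\pi i s\tau}$: $\theta_2(0|\tau)=\sum_{n\in\mathbb{Z}} q^{(n+1/2)^2/2}$, $\theta_3(0|\tau)=\sum_{n} q^{n^2/2}$, $\theta_4(0|\tau)=\sum_{n}(-1)^n q^{n^2/2}$; $\eta(\tau)=q^{1/24}\prod_{n\ge1}(1-q^n)$. *)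

From Stdlib Require Import Reals ZArith.
From Coquelicot Require Import Coquelicot.
Open Scope R_scope.

Definition cexp (z : C) : C :=
  (exp (Re z) * cos (Im z), exp (Re z) * sin (Im z)).

Definition qpow (tau : C) (s : R) : C :=
  cexp (Cmult (Cmult (RtoC (2 * PI * s)) Ci) tau).

Fixpoint zpsum (a : Z -> C) (N : nat) : C :=
  match N with
  | O => a 0%Z
  | S k => Cplus (Cplus (zpsum a k) (a (Z.of_nat (S k)))) (a (- Z.of_nat (S k))%Z)
  end.

Definition Clim (u : nat -> C) : C :=
  (real (Lim_seq (fun N => Re (u N))), real (Lim_seq (fun N => Im (u N)))).

(* sum over n in Z (absolutely convergent in all uses below) *)
Definition zsum (a : Z -> C) : C := Clim (zpsum a).

Definition theta2 (tau : C) : C :=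
  zsum (fun n => qpow tau ((IZR n + 1/2) ^ 2 / 2)).
Definition theta3 (tau : C) : C :=
  zsum (fun n => qpow tau (IZR n ^ 2 / 2)).
Definition theta4 (tau : C) : C :=
  zsum (fun n => Cmult (RtoC ((-1) ^ Z.abs_nat n)) (qpow tau (IZR n ^ 2 / 2))).

Fixpoint eta_pprod (tau : C) (N : nat) : C :=
  match N with
  | O => RtoC 1
  | S k => Cmult (eta_pprod tau k) (Cminus (RtoC 1) (qpow tau (INR (S k))))
  end.

Definition eta (tau : C) : C :=
  Cmult (qpow tau (1/24)) (Clim (eta_pprod tau)).

(* Put x = exp(2 pi i tau / 24), so that q = x^24.  At the four rescaled arguments every
   theta function is a series sum_n (+-1) x^(2 a^2), a running through an arithmetic
   progression, and Euler's pentagonal theorem (in Shanks' finite form) gives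
   eta = sum_j (-1)^j x^((6j+1)^2); with a = 3(j+k)+1, b = 3(j-k) the square eta^2 is again a
   signed sum of the x^(2(a^2+b^2)).  So the coefficient of x^N on either side of each identity
   is a count of the lattice points on the circle 2(a^2+b^2) = N, weighted by a function of
   (a, b) mod 6, and the two weights agree because their difference sums to zero over every
   orbit of (a, b) -> (b, a), (-a, -b), (-b, -a).  The identities between the functions follow
   by comparing truncated products, which differ by O(K^2 |x|^K). *)

From Stdlib Require Import Reals ZArith Lia Lra List.
From Coquelicot Require Import Coquelicot.
Import ListNotations.
Open Scope R_scope.

(** * Complex exponential and limits *)

Lemma C_ext (a b : C) : Re a = Re b -> Im a = Im b -> a = b.
Proof. destruct a, b; simpl; intros; subst; reflexivity. Qed.

Lemma cexp_add (a b : C) : cexp (a + b) = (cexp a * cexp b)%C.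
Proof.
  unfold cexp; apply C_ext; unfold Re, Im; simpl;
    rewrite exp_plus, ?cos_plus, ?sin_plus; ring.
Qed.

Lemma cexp_0 : cexp 0 = 1.
Proof. unfold cexp; apply C_ext; simpl; rewrite exp_0, ?cos_0, ?sin_0; ring. Qed.

Lemma cexp_natmul (n : nat) (z : C) : cexp (INR n * z) = (cexp z ^ n)%C.
Proof.
  induction n as [|n IH].
  - replace (RtoC (INR 0) * z)%C with (RtoC 0) by (simpl; ring). apply cexp_0.
  - rewrite S_INR, RtoC_plus, Cmult_plus_distr_r, Cmult_1_l, cexp_add, IH.
    simpl; ring.
Qed.

Lemma Cmod_cexp (z : C) : Cmod (cexp z) = exp (Re z).
Proof.
  unfold cexp, Cmod; simpl.
  replace (exp (Re z) * cos (Im z) * (exp (Re z) * cos (Im z) * 1) +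
           exp (Re z) * sin (Im z) * (exp (Re z) * sin (Im z) * 1))
    with (exp (Re z) ^ 2 * (sin (Im z) ^ 2 + cos (Im z) ^ 2)) by ring.
  rewrite <- (Rsqr_pow2 (sin _)), <- (Rsqr_pow2 (cos _)), sin2_cos2, Rmult_1_r.
  apply sqrt_pow2, Rlt_le, exp_pos.
Qed.

Lemma Im_le_Cmod (z : C) : Rabs (Im z) <= Cmod z.
Proof. eapply Rle_trans; [apply Rmax_r | apply Rmax_Cmod]. Qed.

Definition is_lim_C (u : nat -> C) (l : C) : Prop :=
  is_lim_seq (fun n => Re (u n)) (Re l) /\ is_lim_seq (fun n => Im (u n)) (Im l).

Lemma is_lim_C_ext u v l : (forall n, u n = v n) -> is_lim_C u l -> is_lim_C v l.
Proof.
  intros E [H1 H2]; split; eapply is_lim_seq_ext; eauto; intros n; simpl; rewrite E; auto.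
Qed.

Lemma is_lim_C_const c : is_lim_C (fun _ => c) c.
Proof. split; apply is_lim_seq_const. Qed.

Lemma is_lim_C_plus u v a b :
  is_lim_C u a -> is_lim_C v b -> is_lim_C (fun n => u n + v n)%C (a + b)%C.
Proof. intros [H1 H2] [H3 H4]; split; apply is_lim_seq_plus'; auto. Qed.

Lemma is_lim_C_minus u v a b :
  is_lim_C u a -> is_lim_C v b -> is_lim_C (fun n => u n - v n)%C (a - b)%C.
Proof. intros [H1 H2] [H3 H4]; split; apply is_lim_seq_minus'; auto. Qed.

Lemma is_lim_C_mult u v a b :
  is_lim_C u a -> is_lim_C v b -> is_lim_C (fun n => u n * v n)%C (a * b)%C.
Proof.
  intros [H1 H2] [H3 H4]; split; simpl.
  - apply is_lim_seq_minus'; apply is_lim_seq_mult'; auto.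
  - apply is_lim_seq_plus'; apply is_lim_seq_mult'; auto.
Qed.

Lemma is_lim_C_unique u a b : is_lim_C u a -> is_lim_C u b -> a = b.
Proof.
  intros [H1 H2] [H3 H4].
  apply is_lim_seq_unique in H1, H2, H3, H4.
  apply C_ext; apply Rbar_finite_eq; congruence.
Qed.

Lemma Clim_correct u l : is_lim_C u l -> Clim u = l.
Proof.
  intros [H1 H2]; unfold Clim.
  apply is_lim_seq_unique in H1, H2; rewrite H1, H2; destruct l; reflexivity.
Qed.

Lemma is_lim_C_0 u e :
  (forall n, Cmod (u n) <= e n) -> is_lim_seq e 0 -> is_lim_C u 0.
Proof.
  intros Hu He; split; apply is_lim_seq_abs_0;
    apply (is_lim_seq_le_le (fun _ => 0) _ e); auto using is_lim_seq_const;
    intros n; split; try apply Rabs_pos; eapply Rle_trans; eauto.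
  - apply re_le_Cmod.
  - apply Im_le_Cmod.
Qed.

Lemma zpsum_proj_cvg (f : Z -> C) (r : R) (proj : C -> R) :
  0 <= r < 1 -> (forall n, Cmod (f n) <= r ^ Z.abs_nat n) ->
  (forall z, Rabs (proj z) <= Cmod z) -> (forall a b, proj (a + b)%C = proj a + proj b) ->
  exists l : R, is_lim_seq (fun N => proj (zpsum f N)) l.
Proof.
  intros Hr Hf Hle Hadd.
  set (g n := proj (f (Z.of_nat (S n))) + proj (f (- Z.of_nat (S n))%Z)).
  assert (Hg : ex_series g).
  { apply (ex_series_le g (fun n => scal (2 * r) (r ^ n))).
    - intros n; unfold g, scal; simpl; unfold mult; simpl.
      pose proof (Hle (f (Z.of_nat (S n)))); pose proof (Hle (f (- Z.of_nat (S n))%Z)).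
      pose proof (Hf (Z.of_nat (S n))); pose proof (Hf (- Z.of_nat (S n))%Z).
      simpl Z.abs_nat in *; rewrite SuccNat2Pos.id_succ in *; simpl in *.
      eapply Rle_trans; [apply Rabs_triang|]; lra.
    - apply (@ex_series_scal_l R_AbsRing R_NormedModule).
      eexists; apply is_series_geom; rewrite Rabs_pos_eq; lra. }
  assert (Hsum : forall N, proj (zpsum f (S N)) = proj (f 0%Z) + sum_n g N).
  { induction N as [|N IH].
    - rewrite sum_O; simpl zpsum; rewrite !Hadd; unfold g; simpl; ring.
    - rewrite sum_Sn; change (zpsum f (S (S N))) with
        (zpsum f (S N) + f (Z.of_nat (S (S N))) + f (- Z.of_nat (S (S N)))%Z)%C.
      rewrite !Hadd, IH; unfold g, plus; simpl; ring. }
  exists (proj (f 0%Z) + Series g).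
  apply is_lim_seq_incr_1, (is_lim_seq_ext (fun N => proj (f 0%Z) + sum_n g N)); auto.
  apply (is_lim_seq_plus' _ _ _ _ (is_lim_seq_const _)), (Series_correct _ Hg).
Qed.

Lemma is_lim_C_zpsum (f : Z -> C) (r : R) :
  0 <= r < 1 -> (forall n, Cmod (f n) <= r ^ Z.abs_nat n) -> is_lim_C (zpsum f) (zsum f).
Proof.
  intros Hr Hf.
  destruct (zpsum_proj_cvg f r Re Hr Hf re_le_Cmod (fun _ _ => eq_refl)) as [l1 H1].
  destruct (zpsum_proj_cvg f r Im Hr Hf Im_le_Cmod (fun _ _ => eq_refl)) as [l2 H2].
  assert (Hl : is_lim_C (zpsum f) (l1, l2)) by (split; assumption).
  unfold zsum; rewrite (Clim_correct _ _ Hl); exact Hl.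
Qed.

Lemma pow_le_1 (c : R) n : 0 <= c <= 1 -> c ^ n <= 1.
Proof. intros H; induction n; simpl; [lra|]; pose proof (pow_le c n); nra. Qed.

Lemma pow_le_pow_contract (c : R) m n : 0 <= c <= 1 -> (m <= n)%nat -> c ^ n <= c ^ m.
Proof.
  intros H Hmn; replace n with (m + (n - m))%nat by lia; rewrite pow_add.
  pose proof (pow_le_1 c (n - m) H); pose proof (pow_le c m); nra.
Qed.

Lemma abs_le_sq (n : Z) : (Z.abs n <= n * n)%Z.
Proof. destruct (Z.abs_spec n) as [[? ->]|[? ->]]; nia. Qed.

Lemma lin_geom_le s n : 0 <= s < 1 -> (1 - s) * (INR n + 1) * s ^ n <= 1 - s ^ S n.
Proof.
  intros Hs; induction n as [|n IH]; [simpl; lra|].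
  rewrite S_INR; simpl pow in *.
  pose proof (pow_le s n (proj1 Hs)); pose proof (pow_le_1 s n ltac:(lra)).
  assert (s * ((1 - s) * (INR n + 1) * s ^ n) <= s * (1 - s * s ^ n))
    by (apply Rmult_le_compat_l; lra).
  assert (0 <= (1 - s) * (1 - s * s ^ n)) by (apply Rmult_le_pos; nra).
  nra.
Qed.

(* With s = r^(1/4): (n+1)^2 r^n = ((n+1) s^n)^2 (s^2)^n, and (n+1) s^n is bounded. *)
Lemma is_lim_seq_sqr_geom r : 0 <= r < 1 -> is_lim_seq (fun n => (INR n + 1) ^ 2 * r ^ n) 0.
Proof.
  intros Hr.
  set (s := sqrt (sqrt r)).
  assert (Hs0 : 0 <= s) by apply sqrt_pos.
  assert (Hs4 : s * s * (s * s) = r).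
  { unfold s; rewrite sqrt_sqrt by apply sqrt_pos; apply sqrt_sqrt; lra. }
  assert (Hs1 : s < 1).
  { destruct (Rlt_le_dec s 1) as [|Hs]; auto.
    assert (1 <= s * s) by nra; nra. }
  apply (is_lim_seq_le_le (fun _ => 0) _ (fun n => (/ (1 - s)) ^ 2 * (s * s) ^ n)).
  - intros n; pose proof (pos_INR n); pose proof (pow_le s n Hs0);
      pose proof (pow_le (s * s) n ltac:(nra)).
    assert (Hlin : (INR n + 1) * s ^ n <= / (1 - s)).
    { apply Rmult_le_reg_l with (1 - s); [lra|]; rewrite Rinv_r by lra.
      pose proof (lin_geom_le s n (conj Hs0 Hs1)); pose proof (pow_le s (S n) Hs0); nra. }
    replace ((INR n + 1) ^ 2 * r ^ n) with (((INR n + 1) * s ^ n) ^ 2 * (s * s) ^ n)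
      by (rewrite <- Hs4, !Rpow_mult_distr; ring).
    assert (0 <= (INR n + 1) * s ^ n) by nra.
    split; [apply Rmult_le_pos; auto; apply pow_le; auto|].
    apply Rmult_le_compat_r; auto; apply pow_incr; auto.
  - apply is_lim_seq_const.
  - replace (Finite 0) with (Rbar_mult ((/ (1 - s)) ^ 2) 0) by (simpl; f_equal; ring).
    apply is_lim_seq_scal_l, is_lim_seq_geom; rewrite Rabs_pos_eq; nra.
Qed.

(** * Finite sums over lists *)

Definition csum {A} (l : list A) (f : A -> C) : C :=
  fold_right (fun a s => (f a + s)%C) 0 l.

Lemma csum_app {A} (l1 l2 : list A) f : csum (l1 ++ l2) f = (csum l1 f + csum l2 f)%C.
Proof. induction l1; simpl; [|rewrite IHl1]; ring. Qed.

Lemma csum_ext {A} (l : list A) f g : (forall a, In a l -> f a = g a) -> csum l f = csum l g.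
Proof. induction l; simpl; intros H; auto; rewrite H, IHl; auto. Qed.

Lemma csum_plus {A} (l : list A) f g : csum l (fun a => f a + g a)%C = (csum l f + csum l g)%C.
Proof. induction l; simpl; [|rewrite IHl]; ring. Qed.

Lemma csum_scal {A} (l : list A) c f : csum l (fun a => c * f a)%C = (c * csum l f)%C.
Proof. induction l; simpl; [|rewrite IHl]; ring. Qed.

Lemma csum_map {A B} (l : list A) (g : A -> B) f : csum (map g l) f = csum l (fun a => f (g a)).
Proof. induction l; simpl; [|rewrite IHl]; auto. Qed.

Lemma csum_zero {A} (l : list A) (f : A -> C) : (forall a, In a l -> f a = 0) -> csum l f = 0.
Proof. induction l; simpl; intros H; auto; rewrite H, IHl; auto; ring. Qed.

Lemma csum_list_prod {A B} (s : list A) (t : list B) f g :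
  csum (list_prod s t) (fun p => f (fst p) * g (snd p))%C = (csum s f * csum t g)%C.
Proof.
  induction s; simpl; [ring|].
  rewrite csum_app, IHs, csum_map; simpl; rewrite csum_scal; ring.
Qed.

Lemma Cmod_csum_le {A} (l : list A) f b :
  (forall a, In a l -> Cmod (f a) <= b) -> Cmod (csum l f) <= INR (length l) * b.
Proof.
  induction l as [|a l IH]; intros H.
  - simpl; rewrite Cmod_0; lra.
  - change (Cmod (f a + csum l f)%C <= INR (S (length l)) * b).
    rewrite S_INR; eapply Rle_trans; [apply Cmod_triangle|].
    pose proof (H a (or_introl eq_refl)); pose proof (IH (fun b Hb => H b (or_intror Hb))); lra.
Qed.

Definition zlsum {A} (l : list A) (f : A -> Z) : Z :=
  fold_right (fun a s => (f a + s)%Z) 0%Z l.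

Lemma zlsum_app {A} (l1 l2 : list A) f : zlsum (l1 ++ l2) f = (zlsum l1 f + zlsum l2 f)%Z.
Proof. induction l1; simpl; [|rewrite IHl1]; ring. Qed.

Lemma zlsum_ext {A} (l : list A) f g : (forall a, In a l -> f a = g a) -> zlsum l f = zlsum l g.
Proof. induction l; simpl; intros H; auto; rewrite H, IHl; auto. Qed.

Lemma zlsum_plus {A} (l : list A) f g :
  zlsum l (fun a => f a + g a)%Z = (zlsum l f + zlsum l g)%Z.
Proof. induction l; simpl; [|rewrite IHl]; ring. Qed.

Lemma zlsum_scal {A} (l : list A) c f : zlsum l (fun a => c * f a)%Z = (c * zlsum l f)%Z.
Proof. induction l; simpl; [|rewrite IHl]; ring. Qed.

Lemma zlsum_map {A B} (l : list A) (g : A -> B) f : zlsum (map g l) f = zlsum l (fun a => f (g a)).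
Proof. induction l; simpl; [|rewrite IHl]; auto. Qed.

Lemma zlsum_zero {A} (l : list A) f : (forall a, In a l -> f a = 0%Z) -> zlsum l f = 0%Z.
Proof. induction l; simpl; intros H; auto; rewrite H, IHl; auto. Qed.

Lemma zlsum_support {A} (eq_dec : forall x y : A, {x = y} + {x <> y}) (l1 l2 : list A) F :
  NoDup l1 -> NoDup l2 -> (forall a, F a <> 0%Z -> In a l1 <-> In a l2) ->
  zlsum l1 F = zlsum l2 F.
Proof.
  revert l2; induction l1 as [|a l1 IH]; intros l2 H1 H2 H; simpl.
  - symmetry; apply zlsum_zero; intros b Hb.
    destruct (Z.eq_dec (F b) 0) as [|Hne]; auto; apply H in Hne; tauto.
  - inversion H1 as [|? ? Ha H1']; subst.
    destruct (Z.eq_dec (F a) 0) as [E|E].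
    + rewrite E, (IH l2); auto.
      intros b Hb; rewrite <- H by auto; simpl.
      split; auto; intros [<-|?]; auto; contradiction.
    + assert (Hin : In a l2) by (apply H; simpl; auto).
      destruct (in_split _ _ Hin) as [l2a [l2b ->]].
      pose proof (NoDup_remove_2 _ _ _ H2) as Hnot.
      rewrite zlsum_app; simpl; rewrite (IH (l2a ++ l2b)), zlsum_app; [ring|auto|
        eapply NoDup_remove_1; eauto|].
      intros b Hb; specialize (H b Hb); simpl in H; rewrite in_app_iff in *; simpl in H.
      destruct (eq_dec a b) as [<-|Hab]; [tauto|].
      split; intros Hb'.
      * assert (HH : a = b \/ In b l1) by auto; apply H in HH; intuition congruence.
      * assert (HH : In b l2a \/ a = b \/ In b l2b) by tauto; apply H in HH; intuition congruence.
Qed.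

Lemma zlsum_reindex {A B} (eq_dec : forall x y : B, {x = y} + {x <> y})
  (phi : A -> B) (s : list A) (t : list B) F :
  (forall x y, phi x = phi y -> x = y) -> NoDup s -> NoDup t ->
  (forall a, In a s -> F (phi a) <> 0%Z -> In (phi a) t) ->
  (forall b, In b t -> F b <> 0%Z -> exists a, In a s /\ phi a = b) ->
  zlsum s (fun a => F (phi a)) = zlsum t F.
Proof.
  intros Hinj Hs Ht Hto Honto; rewrite <- zlsum_map; apply zlsum_support; auto.
  - apply NoDup_map_NoDup_ForallPairs; auto; intros x y _ _; apply Hinj.
  - intros b Hb; rewrite in_map_iff; split.
    + intros [a [<- Ha]]; auto.
    + intros Hbt; destruct (Honto b Hbt Hb) as [a [Ha <-]]; eauto.
Qed.

Fixpoint zrange (K : nat) : list Z :=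
  match K with
  | O => [0%Z]
  | S k => zrange k ++ [Z.of_nat (S k); (- Z.of_nat (S k))%Z]
  end.

Lemma zpsum_csum f K : zpsum f K = csum (zrange K) f.
Proof. induction K; simpl; [ring|]; rewrite csum_app, <- IHK; simpl; ring. Qed.

Lemma in_zrange K n : In n (zrange K) <-> (Z.abs n <= Z.of_nat K)%Z.
Proof.
  induction K as [|K IH]; simpl.
  - split; [intros [<-|[]]; simpl; lia | intros; left; lia].
  - rewrite in_app_iff, IH; simpl; split; [intros [H|[H|[H|[]]]]; lia|].
    intros H; destruct (Z.le_gt_cases (Z.abs n) (Z.of_nat K)); [left; auto | right; lia].
Qed.

Lemma NoDup_zrange K : NoDup (zrange K).
Proof.
  induction K as [|K IH]; simpl; [repeat constructor; auto|].
  apply NoDup_app; auto.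
  - constructor; [intros [H|[]]; lia | repeat constructor; auto].
  - intros n H1 H2; apply in_zrange in H1; simpl in H2; destruct H2 as [H|[H|[]]]; lia.
Qed.

Lemma length_zrange K : length (zrange K) = (2 * K + 1)%nat.
Proof. induction K; simpl; auto; rewrite length_app, IHK; simpl; lia. Qed.

Definition box K : list (Z * Z) := list_prod (zrange K) (zrange K).

Lemma in_box K p :
  In p (box K) <-> (Z.abs (fst p) <= Z.of_nat K /\ Z.abs (snd p) <= Z.of_nat K)%Z.
Proof. destruct p; unfold box; rewrite in_prod_iff, !in_zrange; reflexivity. Qed.

Lemma NoDup_list_prod {A B} (s : list A) (t : list B) :
  NoDup s -> NoDup t -> NoDup (list_prod s t).
Proof.
  intros Hs Ht; induction Hs as [|a s Ha Hs IH]; simpl; [constructor|].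
  apply NoDup_app; auto.
  - apply NoDup_map_NoDup_ForallPairs; auto; intros x y _ _ E; inversion E; auto.
  - intros p H1 H2; apply in_map_iff in H1; destruct H1 as [y [<- _]].
    apply in_prod_iff in H2; tauto.
Qed.

Lemma NoDup_box K : NoDup (box K).
Proof. apply NoDup_list_prod; apply NoDup_zrange. Qed.

Lemma length_box K : length (box K) = ((2 * K + 1) * (2 * K + 1))%nat.
Proof. unfold box; rewrite length_prod, length_zrange; auto. Qed.

(** * Truncated products of series over Z *)

(* A list of pairs (w, e) stands for the polynomial sum of the w x^e. *)
Definition meval (x : C) (L : list (Z * nat)) : C :=
  csum L (fun p => IZR (fst p) * x ^ snd p)%C.

Definition mcoef (L : list (Z * nat)) (N : nat) : Z :=
  zlsum L (fun p => if Nat.eqb (snd p) N then fst p else 0%Z).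

Definition mscale (c : Z) (L : list (Z * nat)) : list (Z * nat) :=
  map (fun p => ((c * fst p)%Z, snd p)) L.

Lemma meval_app x L1 L2 : meval x (L1 ++ L2) = (meval x L1 + meval x L2)%C.
Proof. apply csum_app. Qed.

Lemma mcoef_app L1 L2 N : mcoef (L1 ++ L2) N = (mcoef L1 N + mcoef L2 N)%Z.
Proof. apply zlsum_app. Qed.

Lemma meval_mscale x c L : meval x (mscale c L) = (IZR c * meval x L)%C.
Proof.
  unfold meval, mscale; rewrite csum_map, <- csum_scal.
  apply csum_ext; intros p _; simpl; rewrite mult_IZR, RtoC_mult; ring.
Qed.

Lemma mcoef_mscale c L N : mcoef (mscale c L) N = (c * mcoef L N)%Z.
Proof.
  unfold mcoef, mscale; rewrite zlsum_map, <- zlsum_scal.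
  apply zlsum_ext; intros p _; simpl; destruct (Nat.eqb _ N); ring.
Qed.

Lemma csum_seq_monomial x (w : Z) e M :
  csum (seq 0 M) (fun N => IZR (if Nat.eqb e N then w else 0%Z) * x ^ N)%C
  = if Nat.ltb e M then (IZR w * x ^ e)%C else 0.
Proof.
  induction M as [|M IH]; [destruct e; reflexivity|].
  rewrite seq_S, csum_app, IH; simpl.
  destruct (Nat.eqb_spec e M) as [->|Hne].
  - rewrite Nat.ltb_irrefl, (proj2 (Nat.ltb_lt M (S M))) by lia; ring.
  - destruct (Nat.ltb_spec e M), (Nat.ltb_spec e (S M)); try lia; ring.
Qed.

Lemma meval_split x M L :
  meval x L = (csum (seq 0 M) (fun N => IZR (mcoef L N) * x ^ N)
               + csum L (fun p => if Nat.leb M (snd p) then IZR (fst p) * x ^ snd p else 0))%C.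
Proof.
  induction L as [|[w e] L IH]; unfold meval, mcoef in *.
  - rewrite (csum_zero (seq 0 M)); [simpl; ring | intros; simpl; ring].
  - change (csum ((w, e) :: L) ?f) with (f (w, e) + csum L f)%C.
    change (zlsum ((w, e) :: L) ?f) with (f (w, e) + zlsum L f)%Z.
    cbn [fst snd].
    rewrite (csum_ext (seq 0 M) _
      (fun N => IZR (if Nat.eqb e N then w else 0%Z) * x ^ N
                + IZR (zlsum L (fun p => if Nat.eqb (snd p) N then fst p else 0%Z)) * x ^ N)%C)
      by (intros N _; cbv beta; rewrite plus_IZR, RtoC_plus; ring).
    rewrite IH, (csum_plus (seq 0 M)), csum_seq_monomial.
    destruct (Nat.ltb_spec e M), (Nat.leb_spec M e); try lia; ring.
Qed.

(* Once the coefficients below M cancel, every remaining monomial has degree >= M. *)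
Lemma meval_small x M L c :
  Cmod x <= 1 -> (forall N, (N < M)%nat -> mcoef L N = 0%Z) ->
  (forall p, In p L -> Rabs (IZR (fst p)) <= c) ->
  Cmod (meval x L) <= INR (length L) * (c * Cmod x ^ M).
Proof.
  intros Hx Hlow Hc.
  rewrite (meval_split x M L), csum_zero, Cplus_0_l.
  2: { intros N HN; apply in_seq in HN; rewrite Hlow by lia; ring. }
  apply Cmod_csum_le; intros [w e] Hp; specialize (Hc _ Hp); simpl in Hc.
  pose proof (Cmod_ge_0 x); pose proof (pow_le (Cmod x) M ltac:(lra)).
  pose proof (Rabs_pos (IZR w)).
  cbn [fst snd]; destruct (Nat.leb_spec M e).
  - rewrite Cmod_mult, Cmod_pow, Cmod_R.
    pose proof (pow_le_pow_contract (Cmod x) M e ltac:(lra) ltac:(lia)); nra.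
  - rewrite Cmod_0; nra.
Qed.

Lemma meval_vanishing_lim (L : nat -> list (Z * nat)) x (c : Z) (d : nat) :
  Cmod x < 1 -> (0 <= c)%Z ->
  (forall K N, (N < K)%nat -> mcoef (L K) N = 0%Z) ->
  (forall K p, In p (L K) -> (Z.abs (fst p) <= c)%Z) ->
  (forall K, (length (L K) <= d * (K + 1) * (K + 1))%nat) ->
  is_lim_C (fun K => meval x (L K)) 0.
Proof.
  intros Hx Hc0 Hcoef Hw Hlen; apply IZR_le in Hc0.
  apply (is_lim_C_0 _ (fun K => IZR c * INR d * ((INR K + 1) ^ 2 * Cmod x ^ K))).
  - intros K; pose proof (Cmod_ge_0 x); pose proof (pow_le (Cmod x) K ltac:(lra)).
    eapply Rle_trans.
    + apply (meval_small x K (L K) (IZR c)); auto; [lra|].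
      intros p Hp; rewrite <- abs_IZR; apply IZR_le, (Hw K p Hp).
    + pose proof (le_INR _ _ (Hlen K)) as HL; rewrite !mult_INR, plus_INR in HL; simpl in HL.
      replace (IZR c * INR d * ((INR K + 1) ^ 2 * Cmod x ^ K))
        with (INR d * (INR K + 1) * (INR K + 1) * (IZR c * Cmod x ^ K)) by ring.
      apply Rmult_le_compat_r; auto; nra.
  - replace (Finite 0) with (Rbar_mult (IZR c * INR d) 0) by (simpl; f_equal; ring).
    apply is_lim_seq_scal_l, is_lim_seq_sqr_geom; split; [apply Cmod_ge_0 | auto].
Qed.

(* The formal series sum_n w(n) x^e(n) over n in Z. *)
Record zseries := ZSeries { zs_w : Z -> Z; zs_e : Z -> nat }.

Definition zs_psum (s : zseries) (x : C) (K : nat) : C :=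
  csum (zrange K) (fun n => IZR (zs_w s n) * x ^ zs_e s n)%C.

Definition zs_unit (s : zseries) : Prop := forall n, (Z.abs (zs_w s n) <= 1)%Z.

Definition zs_prod (s t : zseries) (K : nat) : list (Z * nat) :=
  map (fun p => ((zs_w s (fst p) * zs_w t (snd p))%Z, (zs_e s (fst p) + zs_e t (snd p))%nat))
    (box K).

Definition prod_coef (s t : zseries) (K N : nat) : Z :=
  zlsum (box K) (fun p => if Nat.eqb (zs_e s (fst p) + zs_e t (snd p)) N
                          then (zs_w s (fst p) * zs_w t (snd p))%Z else 0%Z).

Lemma meval_zs_prod x s t K : meval x (zs_prod s t K) = (zs_psum s x K * zs_psum t x K)%C.
Proof.
  unfold meval, zs_prod, zs_psum, box; rewrite csum_map, <- csum_list_prod.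
  apply csum_ext; intros p _; simpl; rewrite mult_IZR, RtoC_mult, Cpow_add_r; ring.
Qed.

Lemma mcoef_zs_prod s t K N : mcoef (zs_prod s t K) N = prod_coef s t K N.
Proof. unfold mcoef, zs_prod; rewrite zlsum_map; reflexivity. Qed.

Lemma length_zs_prod s t K : length (zs_prod s t K) = ((2 * K + 1) * (2 * K + 1))%nat.
Proof. unfold zs_prod; rewrite length_map; apply length_box. Qed.

Lemma zs_prod_unit s t K p :
  zs_unit s -> zs_unit t -> In p (zs_prod s t K) -> (Z.abs (fst p) <= 1)%Z.
Proof.
  intros Hs Ht Hp; unfold zs_prod in Hp; apply in_map_iff in Hp.
  destruct Hp as [[n m] [<- _]]; simpl; rewrite Z.abs_mul.
  specialize (Hs n); specialize (Ht m); nia.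
Qed.

(* Comparing coefficients of the truncated products is enough, since the error
   polynomial has O(K^2) bounded coefficients, all of degree >= K. *)
Lemma zs_product_identity x (k : Z) s1 t1 s2 t2 s3 t3 a1 b1 a2 b2 a3 b3 :
  Cmod x < 1 ->
  zs_unit s1 -> zs_unit t1 -> zs_unit s2 -> zs_unit t2 -> zs_unit s3 -> zs_unit t3 ->
  (forall K N, (N < K)%nat ->
     (prod_coef s1 t1 K N - prod_coef s2 t2 K N = k * prod_coef s3 t3 K N)%Z) ->
  is_lim_C (zs_psum s1 x) a1 -> is_lim_C (zs_psum t1 x) b1 ->
  is_lim_C (zs_psum s2 x) a2 -> is_lim_C (zs_psum t2 x) b2 ->
  is_lim_C (zs_psum s3 x) a3 -> is_lim_C (zs_psum t3 x) b3 ->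
  (a1 * b1 - a2 * b2 = IZR k * (a3 * b3))%C.
Proof.
  intros Hx Hs1 Ht1 Hs2 Ht2 Hs3 Ht3 Hcoef La1 Lb1 La2 Lb2 La3 Lb3.
  set (L K := zs_prod s1 t1 K ++ mscale (-1) (zs_prod s2 t2 K)
                ++ mscale (- k) (zs_prod s3 t3 K)).
  assert (Hlim : is_lim_C (fun K => meval x (L K)) (a1 * b1 - a2 * b2 - IZR k * (a3 * b3))%C).
  { eapply is_lim_C_ext.
    2: apply is_lim_C_minus; [apply is_lim_C_minus|apply is_lim_C_mult; [apply is_lim_C_const|]];
         apply is_lim_C_mult; eauto.
    intros K; unfold L; rewrite !meval_app, !meval_mscale, !meval_zs_prod, !opp_IZR,
      !RtoC_opp; ring. }
  assert (Hzero : is_lim_C (fun K => meval x (L K)) 0).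
  { apply (meval_vanishing_lim L x (1 + Z.abs k) 12 Hx); [lia|..].
    - intros K N HN; unfold L; rewrite !mcoef_app, !mcoef_mscale, !mcoef_zs_prod.
      specialize (Hcoef K N HN); lia.
    - intros K p Hp; unfold L, mscale in Hp; rewrite !in_app_iff, !in_map_iff in Hp.
      destruct Hp as [Hp|[[q [<- Hq]]|[q [<- Hq]]]]; cbn [fst]; rewrite ?Z.abs_mul.
      + pose proof (zs_prod_unit s1 t1 K p Hs1 Ht1 Hp); lia.
      + pose proof (zs_prod_unit s2 t2 K q Hs2 Ht2 Hq); lia.
      + pose proof (zs_prod_unit s3 t3 K q Hs3 Ht3 Hq).
        rewrite Z.abs_opp; nia.
    - intros K; unfold L, mscale; rewrite !length_app, !length_map, !length_zs_prod; lia. }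
  pose proof (is_lim_C_unique _ _ _ Hlim Hzero) as E.
  rewrite <- (Cplus_0_l (IZR k * (a3 * b3))), <- E; ring.
Qed.

(** * Euler's pentagonal theorem *)

Fixpoint qprod (q : C) (k m : nat) : C :=
  match m with
  | O => 1
  | S m' => (qprod q k m' * (1 - q ^ (k + S m')))%C
  end.

(* pent_sign q k = (-1)^k q^(k(k+1)/2) *)
Fixpoint pent_sign (q : C) (k : nat) : C :=
  match k with
  | O => 1
  | S k' => (- q ^ S k' * pent_sign q k')%C
  end.

(* The partial sum over |j| <= n of (-1)^j q^(j(3j-1)/2). *)
Fixpoint pent_psum (q : C) (n : nat) : C :=
  match n with
  | O => 1
  | S n' => (pent_psum q n' + (pent_sign q n - pent_sign q n') * q ^ (n * n))%C
  end.

Definition shanks_term (q : C) (n k : nat) : C :=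
  (pent_sign q k * qprod q k (n - k) * q ^ (n * k))%C.

Definition shanks_sum (q : C) (n : nat) : C := csum (seq 0 (S n)) (shanks_term q n).

Lemma qprod_succ_l q k j : qprod q k (S j) = ((1 - q ^ S k) * qprod q (S k) j)%C.
Proof.
  revert k; induction j as [|j IH]; intros k.
  - change (1 * (1 - q ^ (k + 1)) = (1 - q ^ S k) * 1)%C.
    rewrite Nat.add_1_r; ring.
  - change (qprod q k (S (S j))) with (qprod q k (S j) * (1 - q ^ (k + S (S j))))%C.
    rewrite IH.
    change (qprod q (S k) (S j)) with (qprod q (S k) j * (1 - q ^ (S k + S j)))%C.
    replace (S k + S j)%nat with (k + S (S j))%nat by lia; ring.
Qed.

Lemma shanks_telescope q N m : (m <= N)%nat ->
  csum (seq 0 (S m)) (fun k => shanks_term q (S N) k - shanks_term q N k)%C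
  = (- pent_sign q m * q ^ (S N * S m) * qprod q m (N - m))%C.
Proof.
  induction m as [|m IH]; intros Hm.
  - unfold shanks_term; simpl; rewrite Nat.sub_0_r, !Nat.mul_0_r, Nat.mul_1_r; simpl; ring.
  - rewrite (seq_S (S m)), csum_app, IH by lia.
    change (0 + S m)%nat with (S m).
    unfold csum; cbn [fold_right]; unfold shanks_term.
    replace (S N - S m)%nat with (S (N - S m)) by lia.
    replace (N - m)%nat with (S (N - S m)) by lia.
    rewrite qprod_succ_l.
    change (qprod q (S m) (S (N - S m)))
      with (qprod q (S m) (N - S m) * (1 - q ^ (S m + S (N - S m))))%C.
    replace (S m + S (N - S m))%nat with (S N) by lia.
    change (pent_sign q (S m)) with (- q ^ S m * pent_sign q m)%C.
    replace (S N * S m)%nat with (N * S m + S m)%nat by lia.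
    replace (S N * S (S m))%nat with (N * S m + S m + S N)%nat by lia.
    rewrite !Cpow_add_r; ring.
Qed.

(* Shanks' finite form of Euler's pentagonal number theorem. *)
Lemma shanks_identity q n : shanks_sum q n = pent_psum q n.
Proof.
  induction n as [|n IH]; [unfold shanks_sum, shanks_term; simpl; ring|].
  change (pent_psum q (S n))
    with (pent_psum q n + (pent_sign q (S n) - pent_sign q n) * q ^ (S n * S n))%C.
  rewrite <- IH; unfold shanks_sum.
  rewrite (seq_S (S n)), csum_app; change (0 + S n)%nat with (S n).
  replace (csum (seq 0 (S n)) (shanks_term q (S n)))
    with (csum (seq 0 (S n)) (fun k => shanks_term q (S n) k - shanks_term q n k)%C
          + csum (seq 0 (S n)) (shanks_term q n))%C
    by (rewrite <- csum_plus; apply csum_ext; intros; ring).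
  rewrite shanks_telescope by lia.
  change (csum [S n] ?f) with (f (S n) + 0)%C; unfold shanks_term.
  rewrite !Nat.sub_diag; cbn [qprod]; ring.
Qed.

Lemma qprod_bound q k m : Cmod q < 1 -> Cmod (qprod q k m) <= exp (1 / (1 - Cmod q)).
Proof.
  intros Hq; pose proof (Cmod_ge_0 q) as Hr0; set (r := Cmod q) in *.
  assert (Hstep : Cmod (qprod q k m) <= exp (r * (1 - r ^ m) / (1 - r))).
  { induction m as [|m IH].
    - simpl; rewrite Cmod_1; replace (r * (1 - 1) / (1 - r)) with 0 by (field; lra).
      rewrite exp_0; lra.
    - simpl qprod; rewrite Cmod_mult.
      assert (H1 : Cmod (1 - q ^ (k + S m)) <= 1 + r ^ S m).
      { unfold Cminus; eapply Rle_trans; [apply Cmod_triangle|].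
        rewrite Cmod_opp, Cmod_pow, Cmod_1; fold r.
        pose proof (pow_le_pow_contract r (S m) (k + S m) ltac:(lra) ltac:(lia)); lra. }
      eapply Rle_trans; [apply Rmult_le_compat; try apply Cmod_ge_0; eauto|].
      eapply Rle_trans; [apply Rmult_le_compat_l; [apply Rlt_le, exp_pos | apply exp_ineq1_le]|].
      rewrite <- exp_plus; right; f_equal; change (r ^ S m) with (r * r ^ m); field; lra. }
  eapply Rle_trans; [exact Hstep|].
  left; apply exp_increasing; unfold Rdiv; apply Rmult_lt_compat_r;
    [apply Rinv_0_lt_compat; lra|].
  pose proof (pow_le_1 r m ltac:(lra)); pose proof (pow_le r m Hr0); nra.
Qed.

Lemma pent_sign_bound q k : Cmod q <= 1 -> Cmod (pent_sign q k) <= 1.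
Proof.
  intros Hq; induction k as [|k IH]; [simpl; rewrite Cmod_1; lra|].
  change (pent_sign q (S k)) with (- q ^ S k * pent_sign q k)%C.
  rewrite Cmod_mult, Cmod_opp, Cmod_pow.
  pose proof (pow_le_1 (Cmod q) (S k) (conj (Cmod_ge_0 q) Hq)).
  pose proof (pow_le (Cmod q) (S k) (Cmod_ge_0 q)); pose proof (Cmod_ge_0 (pent_sign q k)); nra.
Qed.

(* All terms of the Shanks sum but the first carry a factor q^(n k), k >= 1. *)
Lemma shanks_sum_approx q n : Cmod q < 1 ->
  Cmod (shanks_sum q n - qprod q 0 n) <= INR n * (exp (1 / (1 - Cmod q)) * Cmod q ^ n).
Proof.
  intros Hq; pose proof (Cmod_ge_0 q) as H0.
  unfold shanks_sum; rewrite <- cons_seq; cbn [csum fold_right].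
  fold (csum (seq 1 n) (shanks_term q n)).
  unfold shanks_term at 1; rewrite Nat.sub_0_r, Nat.mul_0_r; cbn [pent_sign Cpow].
  replace (1 * qprod q 0 n * 1 + csum (seq 1 n) (shanks_term q n) - qprod q 0 n)%C
    with (csum (seq 1 n) (shanks_term q n)) by ring.
  replace (INR n) with (INR (length (seq 1 n))) by (rewrite length_seq; reflexivity).
  apply Cmod_csum_le.
  intros k Hk; apply in_seq in Hk; unfold shanks_term; rewrite !Cmod_mult, Cmod_pow.
  pose proof (pent_sign_bound q k ltac:(lra)); pose proof (qprod_bound q k (n - k) Hq).
  pose proof (pow_le_pow_contract (Cmod q) n (n * k) ltac:(lra) ltac:(nia)).
  pose proof (Cmod_ge_0 (pent_sign q k)); pose proof (Cmod_ge_0 (qprod q k (n - k))).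
  pose proof (pow_le (Cmod q) (n * k) H0).
  apply Rmult_le_compat; nra.
Qed.

(** * Theta and eta functions as series in the nome *)

(* x = q^(1/24): every exponent below is an integer power of it. *)
Definition nome (tau : C) : C := cexp (RtoC (2 * PI / 24) * Ci * tau)%C.

Lemma qpow_nome tau c s N : 24 * s * c = INR N -> qpow (RtoC c * tau)%C s = (nome tau ^ N)%C.
Proof.
  intros H; unfold qpow, nome; rewrite <- cexp_natmul, <- H; f_equal.
  rewrite Cmult_assoc, (Cmult_comm _ (RtoC c)), !Cmult_assoc, <- !RtoC_mult.
  do 3 f_equal; field.
Qed.

Lemma Cmod_nome tau : 0 < Im tau -> 0 < Cmod (nome tau) < 1.
Proof.
  intros H; unfold nome; rewrite Cmod_cexp; split; [apply exp_pos|].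
  replace (Re _) with (- (2 * PI / 24) * Im tau) by (unfold Re, Im; simpl; ring).
  rewrite <- exp_0; apply exp_increasing; pose proof PI_RGT_0; nra.
Qed.

Definition negpow (n : Z) : Z := if Z.eqb (n mod 2) 0 then 1%Z else (-1)%Z.

Lemma negpow_succ n : negpow (n + 1) = (- negpow n)%Z.
Proof.
  unfold negpow; destruct (Z.eqb_spec (n mod 2) 0), (Z.eqb_spec ((n + 1) mod 2) 0);
    Z.div_mod_to_equations; lia.
Qed.

Lemma negpow_opp n : negpow (- n) = negpow n.
Proof.
  unfold negpow; destruct (Z.eqb_spec (n mod 2) 0), (Z.eqb_spec ((- n) mod 2) 0);
    Z.div_mod_to_equations; lia.
Qed.

Lemma negpow_unit n : (Z.abs (negpow n) <= 1)%Z.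
Proof. unfold negpow; destruct (_ =? 0)%Z; simpl; lia. Qed.

Lemma pow_m1_negpow n : (-1) ^ Z.abs_nat n = IZR (negpow n).
Proof.
  assert (H : forall m, (-1) ^ m = IZR (negpow (Z.of_nat m))).
  { induction m as [|m IH]; [reflexivity|].
    rewrite Nat2Z.inj_succ, <- Z.add_1_r, negpow_succ, opp_IZR, <- IH; simpl; ring. }
  rewrite H, Zabs2Nat.id_abs; destruct (Z.abs_spec n) as [[_ ->]|[_ ->]];
    [|rewrite negpow_opp]; reflexivity.
Qed.

Definition eta_series : zseries :=
  ZSeries negpow (fun j => Z.to_nat ((6 * j + 1) * (6 * j + 1))).

Lemma eta_series_unit : zs_unit eta_series.
Proof. intros n; apply negpow_unit. Qed.

Lemma pent_sign_pow24 x j :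
  pent_sign (x ^ 24)%C j = (IZR (negpow (Z.of_nat j)) * x ^ (12 * j * S j))%C.
Proof.
  induction j as [|j IH]; [simpl; unfold negpow; simpl; ring|].
  change (pent_sign (x ^ 24)%C (S j)) with (- (x ^ 24) ^ S j * pent_sign (x ^ 24)%C j)%C.
  rewrite IH, <- Cpow_mult_r, Nat2Z.inj_succ, <- Z.add_1_r, negpow_succ, opp_IZR.
  replace (12 * S j * S (S j))%nat with (24 * S j + 12 * j * S j)%nat by lia.
  rewrite Cpow_add_r, RtoC_opp; ring.
Qed.

(* 1 + 24 j(3j+1)/2 = (6j+1)^2 and 1 + 24 j(3j-1)/2 = (6j-1)^2. *)
Lemma pent_psum_pow24 x n :
  (x * pent_psum (x ^ 24) n)%C = zs_psum eta_series x n.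
Proof.
  unfold zs_psum, eta_series; rewrite <- zpsum_csum; cbn [zs_w zs_e].
  induction n as [|n IH]; [simpl; unfold negpow; simpl; ring|].
  change (pent_psum (x ^ 24) (S n)) with (pent_psum (x ^ 24) n
    + (pent_sign (x ^ 24) (S n) - pent_sign (x ^ 24) n) * (x ^ 24) ^ (S n * S n))%C.
  cbn [zpsum]; rewrite <- IH, !pent_sign_pow24, <- Cpow_mult_r.
  rewrite negpow_opp, Nat2Z.inj_succ, <- Z.add_1_r, negpow_succ, opp_IZR.
  replace (Z.to_nat ((6 * (Z.of_nat n + 1) + 1) * (6 * (Z.of_nat n + 1) + 1)))
    with (1 + (12 * S n * S (S n) + 24 * (S n * S n)))%nat by nia.
  replace (Z.to_nat ((6 * - (Z.of_nat n + 1) + 1) * (6 * - (Z.of_nat n + 1) + 1)))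
    with (1 + (12 * n * S n + 24 * (S n * S n)))%nat by nia.
  rewrite !Cpow_add_r, RtoC_opp; simpl (x ^ 1)%C; ring.
Qed.

Lemma eta_pprod_qprod tau n : eta_pprod tau n = qprod (nome tau ^ 24)%C 0 n.
Proof.
  induction n as [|n IH]; [reflexivity|].
  change (eta_pprod tau (S n)) with (eta_pprod tau n * (1 - qpow tau (INR (S n))))%C.
  change (qprod (nome tau ^ 24)%C 0 (S n))
    with (qprod (nome tau ^ 24)%C 0 n * (1 - (nome tau ^ 24) ^ S n))%C.
  rewrite IH, <- Cpow_mult_r, <- (qpow_nome tau 1 (INR (S n)) (24 * S n)).
  - replace (RtoC 1 * tau)%C with tau by ring; reflexivity.
  - rewrite mult_INR; simpl (INR 24); ring.
Qed.

Lemma zs_psum_lim s x (f : Z -> C) :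
  Cmod x < 1 -> zs_unit s -> (forall n, (Z.abs_nat n <= zs_e s n)%nat) ->
  (forall n, f n = (IZR (zs_w s n) * x ^ zs_e s n)%C) ->
  is_lim_C (zs_psum s x) (zsum f).
Proof.
  intros Hx Hs He Hf.
  apply (is_lim_C_ext (zpsum f)).
  { intros K; rewrite zpsum_csum; apply csum_ext; auto. }
  apply (is_lim_C_zpsum f (Cmod x)); [split; [apply Cmod_ge_0 | auto]|].
  intros n; rewrite Hf, Cmod_mult, Cmod_R, Cmod_pow, <- abs_IZR.
  pose proof (pow_le_pow_contract (Cmod x) _ _ (conj (Cmod_ge_0 x) (Rlt_le _ _ Hx)) (He n)).
  pose proof (pow_le (Cmod x) (zs_e s n) (Cmod_ge_0 x)).
  pose proof (IZR_le _ _ (Hs n)); pose proof (IZR_le _ _ (Z.abs_nonneg (zs_w s n))); nra.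
Qed.

Lemma euler_pentagonal_approx x n : Cmod x < 1 ->
  Cmod (x * qprod (x ^ 24) 0 n - zs_psum eta_series x n)
  <= exp (1 / (1 - Cmod x ^ 24)) * ((INR n + 1) ^ 2 * Cmod x ^ n).
Proof.
  intros Hx; pose proof (Cmod_ge_0 x); set (B := exp (1 / (1 - Cmod x ^ 24))).
  assert (Hq : Cmod (x ^ 24) < 1)
    by (rewrite Cmod_pow; apply pow_lt_1_compat; [lra | lia]).
  rewrite <- pent_psum_pow24, <- shanks_identity.
  replace (x * qprod (x ^ 24) 0 n - x * shanks_sum (x ^ 24) n)%C
    with (- x * (shanks_sum (x ^ 24) n - qprod (x ^ 24) 0 n))%C by ring.
  rewrite Cmod_mult, Cmod_opp.
  pose proof (shanks_sum_approx (x ^ 24) n Hq) as Hs.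
  rewrite Cmod_pow, <- pow_mult in Hs; fold B in Hs.
  pose proof (pow_le_pow_contract (Cmod x) n (24 * n) ltac:(lra) ltac:(lia)).
  pose proof (pos_INR n); pose proof (pow_le (Cmod x) n ltac:(lra)).
  assert (0 < B) by apply exp_pos.
  pose proof (Cmod_ge_0 (shanks_sum (x ^ 24) n - qprod (x ^ 24) 0 n)).
  assert (Cmod (shanks_sum (x ^ 24) n - qprod (x ^ 24) 0 n) <= INR n * B * Cmod x ^ n).
  { eapply Rle_trans; [exact Hs|]; rewrite <- Rmult_assoc.
    apply Rmult_le_compat_l; [nra | auto]. }
  assert (INR n * B * Cmod x ^ n <= B * ((INR n + 1) ^ 2 * Cmod x ^ n)).
  { replace (B * ((INR n + 1) ^ 2 * Cmod x ^ n)) with ((INR n + 1) ^ 2 * B * Cmod x ^ n)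
      by ring.
    apply Rmult_le_compat_r; auto; apply Rmult_le_compat_r; nra. }
  nra.
Qed.

Lemma eta_lim tau : 0 < Im tau -> is_lim_C (zs_psum eta_series (nome tau)) (eta tau).
Proof.
  intros Ht; pose proof (Cmod_nome tau Ht) as Hx; set (x := nome tau) in *.
  set (g j := (IZR (zs_w eta_series j) * x ^ zs_e eta_series j)%C).
  assert (Hg : is_lim_C (zs_psum eta_series x) (zsum g)).
  { apply zs_psum_lim; [lra | apply eta_series_unit | | reflexivity].
    intros n; cbn [zs_e eta_series]; pose proof (abs_le_sq (6 * n + 1)); lia. }
  assert (Hdiff : is_lim_C (fun n => x * eta_pprod tau n - zs_psum eta_series x n)%C 0).
  { set (B := exp (1 / (1 - Cmod x ^ 24))).
    apply (is_lim_C_0 _ (fun n => B * ((INR n + 1) ^ 2 * Cmod x ^ n))).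
    - intros n; rewrite eta_pprod_qprod; apply euler_pentagonal_approx; lra.
    - replace (Finite 0) with (Rbar_mult B 0) by (simpl; f_equal; ring).
      apply is_lim_seq_scal_l, is_lim_seq_sqr_geom; lra. }
  assert (Hx0 : x <> 0) by (intros E; rewrite E, Cmod_0 in Hx; lra).
  assert (Hprod : is_lim_C (eta_pprod tau) (/ x * zsum g)%C).
  { rewrite <- (Cplus_0_l (zsum g)).
    eapply is_lim_C_ext;
      [|exact (is_lim_C_mult _ _ _ _ (is_lim_C_const (/ x)%C) (is_lim_C_plus _ _ _ _ Hdiff Hg))].
    intros n; simpl; field; auto. }
  unfold eta; rewrite (Clim_correct _ _ Hprod).
  replace tau with (RtoC 1 * tau)%C at 1 by ring.
  rewrite (qpow_nome tau 1 (1 / 24) 1) by (simpl; field); fold x.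
  replace (x ^ 1 * (/ x * zsum g))%C with (zsum g) by (simpl; field; auto); exact Hg.
Qed.

Definition dsq (a : Z) : nat := Z.to_nat (2 * (a * a)).

Lemma abs_nat_le_dsq a n : (Z.abs n <= Z.abs a)%Z -> (Z.abs_nat n <= dsq a)%nat.
Proof. intros H; pose proof (abs_le_sq a); unfold dsq; lia. Qed.

Lemma INR_dsq a : INR (dsq a) = 2 * IZR a ^ 2.
Proof. unfold dsq; rewrite INR_IZR_INZ, Z2Nat.id by nia; rewrite mult_IZR, mult_IZR; ring. Qed.

Definition theta2_series (d : Z) : zseries :=
  ZSeries (fun _ => 1%Z) (fun n => dsq (d * (2 * n + 1))).
Definition theta3_series (d : Z) : zseries := ZSeries (fun _ => 1%Z) (fun n => dsq (d * n)).
Definition theta4_series (d : Z) : zseries := ZSeries negpow (fun n => dsq (d * n)).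

Lemma theta2_series_unit d : zs_unit (theta2_series d).
Proof. intros n; simpl; lia. Qed.

Lemma theta3_series_unit d : zs_unit (theta3_series d).
Proof. intros n; simpl; lia. Qed.

Lemma theta4_series_unit d : zs_unit (theta4_series d).
Proof. intros n; apply negpow_unit. Qed.

Lemma theta2_lim tau c d : 0 < Im tau -> (0 < d)%Z -> 3 * c = 2 * IZR (d * d) ->
  is_lim_C (zs_psum (theta2_series d) (nome tau)) (theta2 (RtoC c * tau)).
Proof.
  intros Ht Hd Hc; pose proof (Cmod_nome tau Ht); apply zs_psum_lim;
    [lra | apply theta2_series_unit | ..]; unfold theta2_series; cbn [zs_e zs_w].
  - intros n; apply abs_nat_le_dsq; nia.
  - intros n; rewrite (qpow_nome _ _ _ (dsq (d * (2 * n + 1)))); [ring|].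
    rewrite INR_dsq, !mult_IZR, plus_IZR, mult_IZR in *.
    replace c with (2 * (IZR d * IZR d) / 3) by lra; simpl; field.
Qed.

Lemma theta3_lim tau c d : 0 < Im tau -> (0 < d)%Z -> 6 * c = IZR (d * d) ->
  is_lim_C (zs_psum (theta3_series d) (nome tau)) (theta3 (RtoC c * tau)).
Proof.
  intros Ht Hd Hc; pose proof (Cmod_nome tau Ht); apply zs_psum_lim;
    [lra | apply theta3_series_unit | ..]; unfold theta3_series; cbn [zs_e zs_w].
  - intros n; apply abs_nat_le_dsq; nia.
  - intros n; rewrite (qpow_nome _ _ _ (dsq (d * n))); [ring|].
    rewrite INR_dsq, !mult_IZR in *.
    replace c with (IZR d * IZR d / 6) by lra; field.
Qed.

Lemma theta4_lim tau c d : 0 < Im tau -> (0 < d)%Z -> 6 * c = IZR (d * d) ->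
  is_lim_C (zs_psum (theta4_series d) (nome tau)) (theta4 (RtoC c * tau)).
Proof.
  intros Ht Hd Hc; pose proof (Cmod_nome tau Ht); apply zs_psum_lim;
    [lra | apply theta4_series_unit | ..]; unfold theta4_series; cbn [zs_e zs_w].
  - intros n; apply abs_nat_le_dsq; nia.
  - intros n; rewrite pow_m1_negpow, (qpow_nome _ _ _ (dsq (d * n))); [reflexivity|].
    rewrite INR_dsq, !mult_IZR in *.
    replace c with (IZR d * IZR d / 6) by lra; field.
Qed.

(** * Lattice points on circles *)

Open Scope Z_scope.

Definition on_circle (N : nat) (p : Z * Z) : bool :=
  2 * (fst p * fst p + snd p * snd p) =? Z.of_nat N.

Definition circle_sum (T : Z -> Z -> Z) (K N : nat) : Z :=
  zlsum (box K) (fun p => if on_circle N p then T (fst p mod 6) (snd p mod 6) else 0).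

Lemma on_circle_box N K p : on_circle N p = true -> (N < K)%nat -> In p (box K).
Proof.
  destruct p as [a b]; unfold on_circle; cbn [fst snd]; intros H HK; apply Z.eqb_eq in H.
  apply in_box; cbn [fst snd]; pose proof (abs_le_sq a); pose proof (abs_le_sq b); nia.
Qed.

Lemma circle_sum_lin T1 T2 T3 a K N :
  circle_sum (fun i j => T1 i j - T2 i j - a * T3 i j) K N
  = circle_sum T1 K N - circle_sum T2 K N - a * circle_sum T3 K N.
Proof.
  unfold circle_sum; induction (box K) as [|p l IH]; simpl; [ring|].
  rewrite IH; destruct (on_circle N p); ring.
Qed.

Lemma zlsum_box_invol K (sg : Z * Z -> Z * Z) F :
  (forall p, sg (sg p) = p) -> (forall p, In p (box K) -> In (sg p) (box K)) ->
  zlsum (box K) (fun p => F (sg p)) = zlsum (box K) F.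
Proof.
  intros Hinv Hbox; apply zlsum_reindex; auto using NoDup_box.
  - decide equality; apply Z.eq_dec.
  - intros p q E; rewrite <- (Hinv p), <- (Hinv q), E; reflexivity.
  - intros q Hq _; exists (sg q); auto.
Qed.

Definition dihedral_sum (T : Z -> Z -> Z) (i j : Z) : Z :=
  T i j + T j i + T ((- i) mod 6) ((- j) mod 6) + T ((- j) mod 6) ((- i) mod 6).

(* The circle and the box are invariant under (a, b) -> (b, a), (-a, -b), (-b, -a). *)
Lemma circle_sum_dihedral T K N :
  (forall i j, 0 <= i < 6 -> 0 <= j < 6 -> dihedral_sum T i j = 0) -> circle_sum T K N = 0.
Proof.
  intros HT; unfold circle_sum.
  set (F p := if on_circle N p then T (fst p mod 6) (snd p mod 6) else 0).
  assert (E : zlsum (box K) (fun p => F (snd p, fst p)) + zlsum (box K) F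
     + zlsum (box K) (fun p => F (- fst p, - snd p))
     + zlsum (box K) (fun p => F (- snd p, - fst p)) = 0).
  { rewrite <- !zlsum_plus; apply zlsum_zero; intros [a b] _; unfold F, on_circle; cbn [fst snd].
    replace (2 * (b * b + a * a)) with (2 * (a * a + b * b)) by ring.
    replace (2 * (- a * - a + - b * - b)) with (2 * (a * a + b * b)) by ring.
    replace (2 * (- b * - b + - a * - a)) with (2 * (a * a + b * b)) by ring.
    destruct (_ =? _); auto.
    replace ((- a) mod 6) with ((- (a mod 6)) mod 6) by (Z.div_mod_to_equations; lia).
    replace ((- b) mod 6) with ((- (b mod 6)) mod 6) by (Z.div_mod_to_equations; lia).
    rewrite <- (HT (a mod 6) (b mod 6)) by (apply Z.mod_pos_bound; lia).
    unfold dihedral_sum; ring. }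
  rewrite (zlsum_box_invol K (fun p => (snd p, fst p))),
    (zlsum_box_invol K (fun p => (- fst p, - snd p))),
    (zlsum_box_invol K (fun p => (- snd p, - fst p))) in E; [lia|..];
    intros [a b]; cbn [fst snd]; rewrite ?Z.opp_involutive, ?in_box; cbn [fst snd];
    rewrite ?Z.abs_opp; tauto.
Qed.

Lemma prod_coef_circle s t K N (phi : Z * Z -> Z * Z) (T : Z -> Z -> Z) :
  (N < K)%nat ->
  (forall p, Nat.eqb (zs_e s (fst p) + zs_e t (snd p)) N = on_circle N (phi p)) ->
  (forall p, zs_w s (fst p) * zs_w t (snd p) = T (fst (phi p) mod 6) (snd (phi p) mod 6)) ->
  (forall p q, phi p = phi q -> p = q) ->
  (forall q, In q (box K) -> T (fst q mod 6) (snd q mod 6) <> 0 ->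
     exists p, In p (box K) /\ phi p = q) ->
  prod_coef s t K N = circle_sum T K N.
Proof.
  intros HK Hexp Hw Hinj Honto; unfold prod_coef, circle_sum.
  set (F q := if on_circle N q then T (fst q mod 6) (snd q mod 6) else 0).
  transitivity (zlsum (box K) (fun p => F (phi p))).
  - apply zlsum_ext; intros p _; unfold F; rewrite Hexp, Hw; reflexivity.
  - apply zlsum_reindex; auto using NoDup_box; unfold F.
    + decide equality; apply Z.eq_dec.
    + intros p _; destruct (on_circle N (phi p)) eqn:E; [|congruence].
      intros _; eapply on_circle_box; eauto.
    + intros q Hq; destruct (on_circle N q); [auto | congruence].
Qed.

Lemma dsq_on_circle u v N : Nat.eqb (dsq u + dsq v) N = on_circle N (u, v).
Proof.
  unfold dsq, on_circle; cbn [fst snd].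
  destruct (Nat.eqb_spec (Z.to_nat (2 * (u * u)) + Z.to_nat (2 * (v * v))) N),
    (Z.eqb_spec (2 * (u * u + v * v)) (Z.of_nat N)); auto; nia.
Qed.

Lemma eta_exp_on_circle j k N :
  Nat.eqb (zs_e eta_series j + zs_e eta_series k) N
  = on_circle N (3 * (j + k) + 1, 3 * (j - k)).
Proof.
  unfold on_circle; cbn [zs_e eta_series fst snd].
  destruct (Nat.eqb_spec (Z.to_nat ((6 * j + 1) * (6 * j + 1))
                          + Z.to_nat ((6 * k + 1) * (6 * k + 1))) N),
    (Z.eqb_spec (2 * ((3 * (j + k) + 1) * (3 * (j + k) + 1) + 3 * (j - k) * (3 * (j - k))))
       (Z.of_nat N)); auto; nia.
Qed.

Ltac reduce_mod6 :=
  repeat match goal with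
  | |- context [ ?e mod 6 ] =>
      first [ replace (e mod 6) with 0 by (Z.div_mod_to_equations; lia)
            | replace (e mod 6) with 1 by (Z.div_mod_to_equations; lia)
            | replace (e mod 6) with 2 by (Z.div_mod_to_equations; lia)
            | replace (e mod 6) with 3 by (Z.div_mod_to_equations; lia)
            | replace (e mod 6) with 4 by (Z.div_mod_to_equations; lia)
            | replace (e mod 6) with 5 by (Z.div_mod_to_equations; lia) ]
  end.

Ltac check_residues :=
  let i := fresh "i" in let j := fresh "j" in
  intros i j ? ?;
  assert (Hi : i = 0 \/ i = 1 \/ i = 2 \/ i = 3 \/ i = 4 \/ i = 5) by lia;
  assert (Hj : j = 0 \/ j = 1 \/ j = 2 \/ j = 3 \/ j = 4 \/ j = 5) by lia;
  destruct Hi as [-> | [-> | [-> | [-> | [-> | ->]]]]];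
  destruct Hj as [-> | [-> | [-> | [-> | [-> | ->]]]]];
  reflexivity.

Ltac residue_cases e :=
  let E := fresh "E" in
  assert (E : e mod 6 = 0 \/ e mod 6 = 1 \/ e mod 6 = 2 \/ e mod 6 = 3 \/ e mod 6 = 4
              \/ e mod 6 = 5) by (Z.div_mod_to_equations; lia);
  destruct E as [E | [E | [E | [E | [E | E]]]]]; rewrite ?E in *.

Ltac pair_map_injective :=
  let E := fresh "E" in
  intros [? ?] [? ?] E; pose proof (f_equal fst E); pose proof (f_equal snd E);
  cbn [fst snd] in *; f_equal; lia.

(* tab_xy gives, as a function of (a mod 6, b mod 6), the weight with which the product
   theta_x theta_y counts the lattice point (a, b); tab_eta does the same for eta^2. *)
Definition tab_eta (i j : Z) : Z :=
  match i, j with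
  | 1, 0 => 1
  | 4, 3 => -1
  | _, _ => 0
  end.

Lemma prod_coef_eta K N : (N < K)%nat ->
  prod_coef eta_series eta_series K N = circle_sum tab_eta K N.
Proof.
  intros HK; apply (prod_coef_circle _ _ K N
                      (fun p => (3 * (fst p + snd p) + 1, 3 * (fst p - snd p)))); auto.
  - intros [j k]; apply eta_exp_on_circle.
  - intros [j k]; cbn [zs_w eta_series fst snd]; unfold negpow.
    destruct (Z.eqb_spec (j mod 2) 0), (Z.eqb_spec (k mod 2) 0); reduce_mod6; reflexivity.
  - pair_map_injective.
  - intros [a b] Hq H; apply in_box in Hq; cbn [fst snd] in *.
    exists (((a - 1) / 3 + b / 3) / 2, ((a - 1) / 3 - b / 3) / 2); rewrite in_box; cbn [fst snd].
    residue_cases a; residue_cases b; simpl in H; try congruence;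
      split; try split; try f_equal; Z.div_mod_to_equations; lia.
Qed.

Definition tab_23 (i j : Z) : Z :=
  match i, j with
  | (1 | 3 | 5), 0 => 1
  | _, _ => 0
  end.

Definition tab_32 (i j : Z) : Z :=
  match i, j with
  | (0 | 2 | 4), 3 => 1
  | _, _ => 0
  end.

Definition tab_43 (i j : Z) : Z :=
  match i with
  | 0 => 1
  | 3 => -1
  | _ => 0
  end.

Definition tab_34 (i j : Z) : Z :=
  match i, j with
  | (0 | 3), (0 | 2 | 4) => 1
  | (0 | 3), _ => -1
  | _, _ => 0
  end.

Lemma prod_coef_23 K N : (N < K)%nat ->
  prod_coef (theta2_series 1) (theta3_series 6) K N = circle_sum tab_23 K N.
Proof.
  intros HK; apply (prod_coef_circle _ _ K N (fun p => (2 * fst p + 1, 6 * snd p))); auto.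
  - intros [n m]; cbn [zs_e theta2_series theta3_series fst snd].
    rewrite Z.mul_1_l; apply dsq_on_circle.
  - intros [n m]; cbn [zs_w theta2_series theta3_series fst snd].
    residue_cases (2 * n + 1); reduce_mod6; reflexivity || (exfalso; Z.div_mod_to_equations; lia).
  - pair_map_injective.
  - intros [a b] Hq H; apply in_box in Hq; cbn [fst snd] in *.
    exists ((a - 1) / 2, b / 6); rewrite in_box; cbn [fst snd].
    residue_cases a; residue_cases b; simpl in H; try congruence;
      split; try split; try f_equal; Z.div_mod_to_equations; lia.
Qed.

Lemma prod_coef_32 K N : (N < K)%nat ->
  prod_coef (theta3_series 2) (theta2_series 3) K N = circle_sum tab_32 K N.
Proof.
  intros HK; apply (prod_coef_circle _ _ K N (fun p => (2 * fst p, 6 * snd p + 3))); auto.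
  - intros [n m]; cbn [zs_e theta2_series theta3_series fst snd].
    replace (3 * (2 * m + 1)) with (6 * m + 3) by ring; apply dsq_on_circle.
  - intros [n m]; cbn [zs_w theta2_series theta3_series fst snd].
    residue_cases (2 * n); reduce_mod6; try reflexivity; exfalso; Z.div_mod_to_equations; lia.
  - pair_map_injective.
  - intros [a b] Hq H; apply in_box in Hq; cbn [fst snd] in *.
    exists (a / 2, (b - 3) / 6); rewrite in_box; cbn [fst snd].
    residue_cases a; residue_cases b; simpl in H; try congruence;
      split; try split; try f_equal; Z.div_mod_to_equations; lia.
Qed.

Lemma prod_coef_43 K N : (N < K)%nat ->
  prod_coef (theta4_series 3) (theta3_series 1) K N = circle_sum tab_43 K N.
Proof.
  intros HK; apply (prod_coef_circle _ _ K N (fun p => (3 * fst p, snd p))); auto.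
  - intros [n m]; cbn [zs_e theta4_series theta3_series fst snd].
    rewrite Z.mul_1_l; apply dsq_on_circle.
  - intros [n m]; cbn [zs_w theta4_series theta3_series fst snd]; unfold negpow.
    destruct (Z.eqb_spec (n mod 2) 0); reduce_mod6; reflexivity.
  - pair_map_injective.
  - intros [a b] Hq H; apply in_box in Hq; cbn [fst snd] in *.
    exists (a / 3, b); rewrite in_box; cbn [fst snd].
    residue_cases a; simpl in H; try congruence;
      split; try split; try f_equal; Z.div_mod_to_equations; lia.
Qed.

Lemma prod_coef_34 K N : (N < K)%nat ->
  prod_coef (theta3_series 3) (theta4_series 1) K N = circle_sum tab_34 K N.
Proof.
  intros HK; apply (prod_coef_circle _ _ K N (fun p => (3 * fst p, snd p))); auto.
  - intros [n m]; cbn [zs_e theta4_series theta3_series fst snd].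
    rewrite Z.mul_1_l; apply dsq_on_circle.
  - intros [n m]; cbn [zs_w theta4_series theta3_series fst snd]; unfold negpow.
    replace (m mod 2) with (m mod 6 mod 2) by (Z.div_mod_to_equations; lia).
    residue_cases (3 * n); residue_cases m; try reflexivity; exfalso; Z.div_mod_to_equations; lia.
  - pair_map_injective.
  - intros [a b] Hq H; apply in_box in Hq; cbn [fst snd] in *.
    exists (a / 3, b); rewrite in_box; cbn [fst snd].
    residue_cases a; simpl in H; try congruence;
      split; try split; try f_equal; Z.div_mod_to_equations; lia.
Qed.

Lemma prod_coef_identity_1 K N : (N < K)%nat ->
  prod_coef (theta2_series 1) (theta3_series 6) K N
  - prod_coef (theta3_series 2) (theta2_series 3) K N
  = 2 * prod_coef eta_series eta_series K N.
Proof.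
  intros HK; rewrite prod_coef_23, prod_coef_32, prod_coef_eta by auto.
  enough (circle_sum (fun i j => tab_23 i j - tab_32 i j - 2 * tab_eta i j) K N = 0)
    by (rewrite circle_sum_lin in *; lia).
  apply circle_sum_dihedral; check_residues.
Qed.

Lemma prod_coef_identity_2 K N : (N < K)%nat ->
  prod_coef (theta4_series 3) (theta3_series 1) K N
  - prod_coef (theta3_series 3) (theta4_series 1) K N
  = 4 * prod_coef eta_series eta_series K N.
Proof.
  intros HK; rewrite prod_coef_43, prod_coef_34, prod_coef_eta by auto.
  enough (circle_sum (fun i j => tab_43 i j - tab_34 i j - 4 * tab_eta i j) K N = 0)
    by (rewrite circle_sum_lin in *; lia).
  apply circle_sum_dihedral; check_residues.
Qed.

Close Scope Z_scope.

Theorem lemma132 (tau : C) (Htau : 0 < Im tau) :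
  Cminus (Cmult (theta2 (Cmult (RtoC (2/3)) tau)) (theta3 (Cmult (RtoC 6) tau)))
         (Cmult (theta3 (Cmult (RtoC (2/3)) tau)) (theta2 (Cmult (RtoC 6) tau)))
    = Cmult (RtoC 2) (Cmult (eta tau) (eta tau))
  /\
  Cminus (Cmult (theta4 (Cmult (RtoC (3/2)) tau)) (theta3 (Cmult (RtoC (1/6)) tau)))
         (Cmult (theta3 (Cmult (RtoC (3/2)) tau)) (theta4 (Cmult (RtoC (1/6)) tau)))
    = Cmult (RtoC 4) (Cmult (eta tau) (eta tau)).
Proof.
  pose proof (proj2 (Cmod_nome tau Htau)) as Hx.
  pose proof (eta_lim tau Htau) as Leta.
  split.
  - apply (zs_product_identity (nome tau) 2 (theta2_series 1) (theta3_series 6)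
             (theta3_series 2) (theta2_series 3) eta_series eta_series);
      auto using theta2_series_unit, theta3_series_unit, eta_series_unit, prod_coef_identity_1;
      [apply theta2_lim | apply theta3_lim | apply theta3_lim | apply theta2_lim];
      first [exact Htau | lia | rewrite mult_IZR; lra].
  - apply (zs_product_identity (nome tau) 4 (theta4_series 3) (theta3_series 1)
             (theta3_series 3) (theta4_series 1) eta_series eta_series);
      auto using theta3_series_unit, theta4_series_unit, eta_series_unit, prod_coef_identity_2;
      [apply theta4_lim | apply theta3_lim | apply theta3_lim | apply theta4_lim];
      first [exact Htau | lia | rewrite mult_IZR; lra].
Qed.
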